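(* For all processes $P,Q$: if $\emptyset\vdash P$ and $P\rightarrow^{\star}Q$, then $Q$ is not an error.
   Context: Let $\mathcal N$ be a countable set of names. Processes are generated by $P,Q ::= 0 \mid P\mid Q \mid (\nu a)P \mid (a)P \mid \alpha.P$, where $(\nu a)P$ is name restriction (binding $a$), $(a)P$ is the authorization scope ($P$ is authorized to act on $a$; $a$ not bound), and prefixes are $\alpha ::= \overline{a}\langle b\rangle$ (output of $b$ on $a$) $\mid a(x)$ (input on $a$, binding $x$) $\mid \overline{a}\langle\!\langle b\rangle\!\rangle$ (send authorization for $b$ on $a$) $\mid a\langle\!\langle b\rangle\!\rangle$ (receive authorization for $b$ on $a$; $b$ not bound). For a name $a$, $\alpha_a$ denotes any prefix of one of these four forms with subject $a$. $(\vec a)P$ abbreviates $(a_1)\cdots(a_m)P$ (possibly empty). Free names: $\mathrm{fn}(0)=\emptyset$, $\mathrm{fn}(P\mid Q)=\mathrm{fn}(P)\cup\mathrm{fn}(Q)$, $\mathrm{fn}((\nu a)P)=\mathrm{fn}(P)\setminus\{a\}$, $\mathrm{fn}((a)P)=\{a\}\cup\mathrm{fn}(P)$, $\mathrm{fn}(\overline{a}\langle b\rangle.P)=\mathrm{fn}(\overline{a}\langle\!\langle b\rangle\!\rangle.P)=\mathrm{fn}(a\langle\!\langle b\rangle\!\rangle.P)=\{a,b\}\cup\mathrm{fn}(P)$, $\mathrm{fn}(a(x).P)=\{a\}\cup(\mathrm{fn}(P)\setminus\{x\})$. $Q\{c/x\}$ is capture-avoiding substitution. Structural congruence $\equiv$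 is the least congruence satisfying: $P\mid 0\equiv P$; $P\mid Q\equiv Q\mid P$; $(P\mid Q)\mid R\equiv P\mid(Q\mid R)$; $(\nu a)0\equiv 0$; $(\nu a)(\nu b)P\equiv(\nu b)(\nu a)P$; $P\mid(\nu a)Q\equiv(\nu a)(P\mid Q)$ if $a\notin\mathrm{fn}(P)$; $\alpha$-convertible processes are congruent; $(a)(b)P\equiv(b)(a)P$; $(a)0\equiv 0$; $(a)(P\mid Q)\equiv(a)P\mid(a)Q$; $(a)(\nu b)P\equiv(\nu b)(a)P$ if $a\neq b$. Reduction $\rightarrow$ is the least relation such that: (comm) $(\vec a_1)(b)\overline{b}\langle c\rangle.P\mid(\vec a_2)(b)b(x).Q\rightarrow(\vec a_1)(b)P\mid(\vec a_2)(b)Q\{c/x\}$; (auth) $(\vec a_1)(b)(c)\overline{b}\langle\!\langle c\rangle\!\rangle.P\mid(\vec a_2)(b)b\langle\!\langle c\rangle\!\rangle.Q\rightarrow(\vec a_1)(b)P\mid(\vec a_2)(b)(c)Q$; if $P\rightarrow Q$ then $P\mid R\rightarrow Q\mid R$, $(\nu a)P\rightarrow(\nu a)Q$ and $(a)P\rightarrow(a)Q$; and if $P\equiv P'\rightarrow Q'\equiv Q$ then $P\rightarrow Q$. $\rightarrow^{\star}$ is the reflexive–transitive closure of $\rightarrow$. Active contexts: $\mathcal C[\cdot] ::= \cdot \mid P\mid\mathcal C[\cdot] \mid (\nu a)\mathcal C[\cdot] \mid (a)\mathcal C[\cdot]$. The predicate $\mathrm{auth}(\mathcal C[\cdot],a)$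 is: $\mathit{false}$ if $\mathcal C[\cdot]=\cdot$; $\mathit{true}$ if $\mathcal C[\cdot]=(a)\mathcal C'[\cdot]$; $\mathrm{auth}(\mathcal C'[\cdot],a)$ if $\mathcal C[\cdot]$ is $(b)\mathcal C'[\cdot]$ with $a\neq b$, $P\mid\mathcal C'[\cdot]$, or $(\nu b)\mathcal C'[\cdot]$. A process $P$ is an error if $P\equiv\mathcal C[\alpha_a.Q]$ for some active context $\mathcal C[\cdot]$, name $a$, prefix $\alpha_a$ and process $Q$ such that either $\mathrm{auth}(\mathcal C[\cdot],a)=\mathit{false}$, or $\alpha_a=\overline{a}\langle\!\langle b\rangle\!\rangle$ and $\mathrm{auth}(\mathcal C[\cdot],b)=\mathit{false}$. The typing judgment $\rho\vdash P$ ($\rho$ a set of names) is the least relation closed under the rules: $\emptyset\vdash 0$; if $\rho_1\vdash P$ and $\rho_2\vdash Q$ then $\rho_1\cup\rho_2\vdash P\mid Q$; if $\rho\vdash P$ and $a\notin\rho$ then $\rho\vdash(\nu a)P$; if $\rho\vdash P$ then $\rho\setminus\{a\}\vdash(a)P$; if $\rho\vdash P$ then $\rho\cup\{a\}\vdash\overline{a}\langle b\rangle.P$; if $\rho\vdash P$ and $x\notin\rho$ then $\rho\cup\{a\}\vdash a(x).P$; if $\rho\vdash P$ and $b\notin\rho$ then $\rho\cup\{a,b\}\vdash\overline{a}\langle\!\langle b\rangle\!\rangle.P$; if $\rho\vdash P$ then $(\rho\setminus\{b\})\cup\{a\}\vdash a\langle\!\langle b\rangle\!\rangle.P$. *)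

From Stdlib Require Import List Arith PeanoNat.
Import ListNotations.

Definition name := nat.

Inductive prefix : Type :=
| POut  : name -> name -> prefix
| PIn   : name -> name -> prefix   (* a(x), x bound           *)
| PAOut : name -> name -> prefix
| PAIn  : name -> name -> prefix.  (* a<<b>>, b not bound     *)

Definition subj (al : prefix) : name :=
  match al with POut a _ | PIn a _ | PAOut a _ | PAIn a _ => a end.

Inductive proc : Type :=
| Nil  : proc
| Par  : proc -> proc -> proc
| Res  : name -> proc -> proc
| Auth : name -> proc -> proc      (* (a) P, a not bound *)
| Pre  : prefix -> proc -> proc.

Definition auths (l : list name) (P : proc) : proc := fold_right Auth P l.

Fixpoint fn (P : proc) : list name :=
  match P with
  | Nil => []
  | Par P Q => fn P ++ fn Q
  | Res a P => remove Nat.eq_dec a (fn P)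
  | Auth a P => a :: fn P
  | Pre (POut a b) P => a :: b :: fn P
  | Pre (PIn a x) P => a :: remove Nat.eq_dec x (fn P)
  | Pre (PAOut a b) P => a :: b :: fn P
  | Pre (PAIn a b) P => a :: b :: fn P
  end.

Definition swap (a b n : name) : name :=
  if Nat.eqb n a then b else if Nat.eqb n b then a else n.

Definition pswap_pre (a b : name) (al : prefix) : prefix :=
  match al with
  | POut x y => POut (swap a b x) (swap a b y)
  | PIn x y => PIn (swap a b x) (swap a b y)
  | PAOut x y => PAOut (swap a b x) (swap a b y)
  | PAIn x y => PAIn (swap a b x) (swap a b y)
  end.

Fixpoint pswap (a b : name) (P : proc) : proc :=
  match P with
  | Nil => Nil
  | Par P Q => Par (pswap a b P) (pswap a b Q)
  | Res c P => Res (swap a b c) (pswap a b P)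
  | Auth c P => Auth (swap a b c) (pswap a b P)
  | Pre al P => Pre (pswap_pre a b al) (pswap a b P)
  end.

(* capture-avoiding simultaneous renaming: every binder is renamed to a
   name fresh for the images of the free names of its scope *)
Definition fresh (l : list name) : name := S (list_max l).

Definition upd (s : name -> name) (x z : name) : name -> name :=
  fun n => if Nat.eqb n x then z else s n.

Fixpoint ren (s : name -> name) (P : proc) : proc :=
  match P with
  | Nil => Nil
  | Par P Q => Par (ren s P) (ren s Q)
  | Res a P =>
      let z := fresh (map s (remove Nat.eq_dec a (fn P))) in
      Res z (ren (upd s a z) P)
  | Auth a P => Auth (s a) (ren s P)
  | Pre (POut a b) P => Pre (POut (s a) (s b)) (ren s P)
  | Pre (PIn a x) P =>
      let z := fresh (map s (remove Nat.eq_dec x (fn P))) in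
      Pre (PIn (s a) z) (ren (upd s x z) P)
  | Pre (PAOut a b) P => Pre (PAOut (s a) (s b)) (ren s P)
  | Pre (PAIn a b) P => Pre (PAIn (s a) (s b)) (ren s P)
  end.

Definition subst (Q : proc) (c x : name) : proc := ren (upd (fun n => n) x c) Q.

(* structural congruence: least congruence with the listed axioms;
   alpha-conversion is generated by renaming single binders to fresh names *)
Inductive cong : proc -> proc -> Prop :=
| cg_refl  : forall P, cong P P
| cg_sym   : forall P Q, cong P Q -> cong Q P
| cg_trans : forall P Q R, cong P Q -> cong Q R -> cong P R
| cg_par   : forall P P' Q Q', cong P P' -> cong Q Q' -> cong (Par P Q) (Par P' Q')
| cg_res   : forall a P P', cong P P' -> cong (Res a P) (Res a P')
| cg_auth  : forall a P P', cong P P' -> cong (Auth a P) (Auth a P')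
| cg_pre   : forall al P P', cong P P' -> cong (Pre al P) (Pre al P')
| cg_par0  : forall P, cong (Par P Nil) P
| cg_parC  : forall P Q, cong (Par P Q) (Par Q P)
| cg_parA  : forall P Q R, cong (Par (Par P Q) R) (Par P (Par Q R))
| cg_res0  : forall a, cong (Res a Nil) Nil
| cg_resC  : forall a b P, cong (Res a (Res b P)) (Res b (Res a P))
| cg_extr  : forall a P Q, ~ In a (fn P) -> cong (Par P (Res a Q)) (Res a (Par P Q))
| cg_alpha_res : forall a b P, ~ In b (fn (Res a P)) ->
    cong (Res a P) (Res b (pswap a b P))
| cg_alpha_in : forall a x y P, ~ In y (remove Nat.eq_dec x (fn P)) ->
    cong (Pre (PIn a x) P) (Pre (PIn a y) (pswap x y P))
| cg_authC : forall a b P, cong (Auth a (Auth b P)) (Auth b (Auth a P))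
| cg_auth0 : forall a, cong (Auth a Nil) Nil
| cg_authD : forall a P Q, cong (Auth a (Par P Q)) (Par (Auth a P) (Auth a Q))
| cg_authR : forall a b P, a <> b -> cong (Auth a (Res b P)) (Res b (Auth a P)).

Inductive red : proc -> proc -> Prop :=
| r_comm : forall a1 a2 b c x P Q,
    red (Par (auths a1 (Auth b (Pre (POut b c) P)))
             (auths a2 (Auth b (Pre (PIn b x) Q))))
        (Par (auths a1 (Auth b P)) (auths a2 (Auth b (subst Q c x))))
| r_auth : forall a1 a2 b c P Q,
    red (Par (auths a1 (Auth b (Auth c (Pre (PAOut b c) P))))
             (auths a2 (Auth b (Pre (PAIn b c) Q))))
        (Par (auths a1 (Auth b P)) (auths a2 (Auth b (Auth c Q))))
| r_par  : forall P Q R, red P Q -> red (Par P R) (Par Q R)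
| r_res  : forall a P Q, red P Q -> red (Res a P) (Res a Q)
| r_authc : forall a P Q, red P Q -> red (Auth a P) (Auth a Q)
| r_struct : forall P P' Q Q', cong P P' -> red P' Q' -> cong Q' Q -> red P Q.

Inductive red_star : proc -> proc -> Prop :=
| rs_refl : forall P, red_star P P
| rs_step : forall P Q R, red P Q -> red_star Q R -> red_star P R.

Inductive ctx : Type :=
| Hole  : ctx
| CPar  : proc -> ctx -> ctx
| CRes  : name -> ctx -> ctx
| CAuth : name -> ctx -> ctx.

Fixpoint plug (C : ctx) (P : proc) : proc :=
  match C with
  | Hole => P
  | CPar Q C' => Par Q (plug C' P)
  | CRes a C' => Res a (plug C' P)
  | CAuth a C' => Auth a (plug C' P)
  end.

Fixpoint cauth (C : ctx) (a : name) : bool :=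
  match C with
  | Hole => false
  | CAuth b C' => if Nat.eqb a b then true else cauth C' a
  | CPar _ C' => cauth C' a
  | CRes _ C' => cauth C' a
  end.

Definition error (P : proc) : Prop :=
  exists (C : ctx) (al : prefix) (Q : proc),
    cong P (plug C (Pre al Q)) /\
    (cauth C (subj al) = false \/
     exists b, al = PAOut (subj al) b /\ cauth C b = false).

(* typing rho |- P ; sets of names are predicates, each rule's conclusion
   set is given up to extensional equality *)
Inductive typed : (name -> Prop) -> proc -> Prop :=
| t_nil  : forall rho, (forall n, ~ rho n) -> typed rho Nil
| t_par  : forall r1 r2 rho P Q, typed r1 P -> typed r2 Q ->
    (forall n, rho n <-> r1 n \/ r2 n) -> typed rho (Par P Q)
| t_res  : forall rho a P, typed rho P -> ~ rho a -> typed rho (Res a P)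
| t_auth : forall r rho a P, typed r P ->
    (forall n, rho n <-> r n /\ n <> a) -> typed rho (Auth a P)
| t_out  : forall r rho a b P, typed r P ->
    (forall n, rho n <-> r n \/ n = a) -> typed rho (Pre (POut a b) P)
| t_in   : forall r rho a x P, typed r P -> ~ r x ->
    (forall n, rho n <-> r n \/ n = a) -> typed rho (Pre (PIn a x) P)
| t_aout : forall r rho a b P, typed r P -> ~ r b ->
    (forall n, rho n <-> r n \/ n = a \/ n = b) -> typed rho (Pre (PAOut a b) P)
| t_ain  : forall r rho a b P, typed r P ->
    (forall n, rho n <-> (r n /\ n <> b) \/ n = a) -> typed rho (Pre (PAIn a b) P).

From Stdlib Require Import List PeanoNat Lia.
Import ListNotations.

(** The typing judgement is replaced by a semantic invariant, [authorized M P]: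
    every active or guarded prefix of [P] lies in the scope of an authorization
    for its subject (and, for an authorization output, for the delegated name),
    where [M] collects the authorizations granted by the enclosing scopes.
    A process typed under the empty environment satisfies [authorized []];
    the invariant is stable under structural congruence (including
    alpha-conversion) and under both reduction rules, the communication rule
    needing its stability under arbitrary renamings; and an error exhibits a
    prefix outside the authorization scopes of its active context. *)

Ltac case_eqb :=
  repeat match goal with
  | |- context [?x =? ?y] => destruct (Nat.eqb_spec x y); subst
  | H : context [?x =? ?y] |- _ => destruct (Nat.eqb_spec x y); subst
  end.

Definition mult (M : list name) (n : name) : nat := count_occ Nat.eq_dec M n.
Arguments mult : simpl never.

Lemma mult_cons x M n : mult (x :: M) n = (if x =? n then 1 else 0) + mult M n.
Proof.
  unfold mult; simpl. destruct (Nat.eq_dec x n) as [->|H].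
  - now rewrite Nat.eqb_refl.
  - now rewrite (proj2 (Nat.eqb_neq _ _) H).
Qed.

Lemma In_mult M n : In n M <-> 0 < mult M n.
Proof. apply count_occ_In. Qed.

Lemma In_mult_le M M' n : mult M n <= mult M' n -> In n M -> In n M'.
Proof. rewrite !In_mult. lia. Qed.

Lemma mult_remove M a n : mult (remove Nat.eq_dec a M) n = if n =? a then 0 else mult M n.
Proof.
  induction M as [|x M IH]; simpl; [now case_eqb|].
  destruct (Nat.eq_dec a x); subst; rewrite ?mult_cons, IH; case_eqb; lia.
Qed.

Fixpoint remove_one (b : name) (M : list name) : list name :=
  match M with
  | [] => []
  | x :: M => if x =? b then M else x :: remove_one b M
  end.

Lemma mult_remove_one M b n :
  mult (remove_one b M) n = if n =? b then mult M n - 1 else mult M n.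
Proof.
  induction M as [|x M IH]; simpl; [now case_eqb|].
  rewrite mult_cons. destruct (Nat.eqb_spec x b); subst; rewrite ?mult_cons, ?IH; case_eqb; lia.
Qed.

Lemma mult_map_remove_one (s : name -> name) M d n : In d M ->
  mult (map s M) n = (if s d =? n then 1 else 0) + mult (map s (remove_one d M)) n.
Proof.
  induction M as [|x M IH]; simpl; [contradiction|].
  intros Hd. destruct (Nat.eqb_spec x d) as [->|Hxd]; rewrite mult_cons; [reflexivity|].
  destruct Hd as [->|Hd]; [congruence|]. simpl. rewrite mult_cons, (IH Hd). lia.
Qed.

(* [M] is a multiset: an authorization output consumes one copy of the
   delegated name, and renaming may identify names, so copies must be counted. *)
Fixpoint authorized (M : list name) (P : proc) : Prop :=
  match P with
  | Nil => True
  | Par P Q => authorized M P /\ authorized M Q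
  | Res a P => authorized (remove Nat.eq_dec a M) P
  | Auth a P => authorized (a :: M) P
  | Pre (POut a _) P => In a M /\ authorized M P
  | Pre (PIn a x) P => In a M /\ authorized (remove Nat.eq_dec x M) P
  | Pre (PAOut a b) P => In a M /\ In b M /\ authorized (remove_one b M) P
  | Pre (PAIn a b) P => In a M /\ authorized (b :: M) P
  end.

Lemma authorized_weaken P M M' :
  (forall n, In n (fn P) -> mult M n <= mult M' n) -> authorized M P -> authorized M' P.
Proof.
  revert M M'.
  induction P as [|P1 IH1 P2 IH2|a P IH|a P IH|[a b|a x|a b|a b] P IH];
    intros M M' HM; simpl in *.
  - trivial.
  - intros [H1 H2]. split; [apply (IH1 M) | apply (IH2 M)]; auto using in_or_app.
  - apply IH. intros n Hn. rewrite !mult_remove. case_eqb; auto using in_in_remove.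
  - apply IH. intros n Hn. rewrite !mult_cons. specialize (HM n (or_intror Hn)). lia.
  - intros [Ha H]. split; [apply (In_mult_le M); auto|].
    apply (IH M); auto.
  - intros [Ha H]. split; [apply (In_mult_le M); auto|].
    refine (IH _ _ (fun n Hn => _) H). rewrite !mult_remove. case_eqb; auto using in_in_remove.
  - intros [Ha [Hb H]]. split; [|split]; [apply (In_mult_le M); auto ..|].
    refine (IH _ _ (fun n Hn => _) H). rewrite !mult_remove_one.
    specialize (HM n (or_intror (or_intror Hn))). case_eqb; lia.
  - intros [Ha H]. split; [apply (In_mult_le M); auto|].
    refine (IH _ _ (fun n Hn => _) H). rewrite !mult_cons.
    specialize (HM n (or_intror (or_intror Hn))). lia.
Qed.

Lemma authorized_ext P M M' :
  (forall n, In n (fn P) -> mult M n = mult M' n) -> authorized M P <-> authorized M' P.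
Proof.
  intros HM. split; apply authorized_weaken; intros n Hn; rewrite (HM n Hn); reflexivity.
Qed.

Lemma swap_invol a b n : swap a b (swap a b n) = n.
Proof. unfold swap. case_eqb; congruence. Qed.

Lemma swap_id a b n : n <> a -> n <> b -> swap a b n = n.
Proof. unfold swap. case_eqb; congruence. Qed.

Lemma swap_inj a b : forall m n, swap a b m = swap a b n -> m = n.
Proof. intros m n E. rewrite <- (swap_invol a b m), E. apply swap_invol. Qed.

Lemma mult_map_swap a b M n : mult (map (swap a b) M) n = mult M (swap a b n).
Proof.
  rewrite <- (swap_invol a b n) at 1. symmetry. apply count_occ_map, swap_inj.
Qed.

Lemma map_remove_inj (f : name -> name) M c : (forall m n, f m = f n -> m = n) ->
  map f (remove Nat.eq_dec c M) = remove Nat.eq_dec (f c) (map f M).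
Proof.
  intros Hf. induction M as [|x M IH]; simpl; [reflexivity|].
  destruct (Nat.eq_dec c x) as [Ecx|Ecx]; destruct (Nat.eq_dec (f c) (f x)) as [E|E];
    simpl; rewrite ?IH; [reflexivity | congruence | apply Hf in E; congruence | reflexivity].
Qed.

Lemma map_remove_one_inj (f : name -> name) M c : (forall m n, f m = f n -> m = n) ->
  map f (remove_one c M) = remove_one (f c) (map f M).
Proof.
  intros Hf. induction M as [|x M IH]; simpl; [reflexivity|].
  destruct (Nat.eqb_spec x c) as [Exc|Exc]; destruct (Nat.eqb_spec (f x) (f c)) as [E|E];
    simpl; rewrite ?IH; [reflexivity | congruence | apply Hf in E; congruence | reflexivity].
Qed.

Lemma authorized_pswap P a b M :
  authorized M P -> authorized (map (swap a b) M) (pswap a b P).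
Proof.
  revert M.
  induction P as [|P1 IH1 P2 IH2|c P IH|c P IH|[c d|c x|c d|c d] P IH]; intros M; simpl;
    rewrite <- ?map_remove_inj, <- ?map_remove_one_inj by apply swap_inj;
    intuition auto using in_map.
  - apply (IH (c :: M)); assumption.
  - apply (IH (d :: M)); assumption.
Qed.

Lemma map_swap_invol a b M : map (swap a b) (map (swap a b) M) = M.
Proof. rewrite map_map. erewrite map_ext by apply swap_invol. apply map_id. Qed.

Lemma pswap_invol P a b : pswap a b (pswap a b P) = P.
Proof.
  induction P as [|P1 IH1 P2 IH2|c P IH|c P IH|[] P IH]; simpl;
    rewrite ?IH1, ?IH2, ?IH, ?swap_invol; reflexivity.
Qed.

Lemma authorized_alpha P a b M : ~ In b (remove Nat.eq_dec a (fn P)) ->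
  authorized (remove Nat.eq_dec a M) P <-> authorized (remove Nat.eq_dec b M) (pswap a b P).
Proof.
  intros Hb. transitivity (authorized (map (swap a b) (remove Nat.eq_dec b M)) P).
  - apply authorized_ext. intros n Hn. rewrite mult_map_swap, !mult_remove.
    destruct (Nat.eqb_spec n a) as [->|Hna].
    + unfold swap. rewrite Nat.eqb_refl. case_eqb; congruence.
    + assert (Hnb : n <> b) by (intros ->; apply Hb, in_in_remove; assumption).
      rewrite swap_id by assumption. case_eqb; congruence.
  - split; intros H; apply (authorized_pswap _ a b) in H;
      rewrite ?map_swap_invol, ?pswap_invol in H; exact H.
Qed.

Definition restrict (L M : list name) : list name :=
  filter (fun n => if in_dec Nat.eq_dec n L then true else false) M.

Lemma In_restrict L M n : In n (restrict L M) -> In n L.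
Proof.
  unfold restrict. rewrite filter_In. destruct (in_dec Nat.eq_dec n L); intuition congruence.
Qed.

Lemma mult_restrict L M n : In n L -> mult (restrict L M) n = mult M n.
Proof.
  intros Hn. unfold restrict. induction M as [|x M IH]; simpl; [reflexivity|].
  destruct (in_dec Nat.eq_dec x L) as [Hx|Hx]; rewrite ?mult_cons, IH; [reflexivity|].
  case_eqb; [contradiction|reflexivity].
Qed.

Lemma mult_map_restrict_le (s : name -> name) L M n :
  mult (map s (restrict L M)) n <= mult (map s M) n.
Proof.
  unfold restrict. induction M as [|x M IH]; simpl; [reflexivity|].
  destruct (in_dec Nat.eq_dec x L); simpl; rewrite !mult_cons; lia.
Qed.

Lemma fresh_notin l : ~ In (fresh l) l.
Proof.
  intros H. unfold fresh in H.
  assert (Hmax : Forall (fun k => k <= list_max l) l) by (apply list_max_le; reflexivity).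
  rewrite Forall_forall in Hmax. apply Hmax in H. lia.
Qed.

Lemma authorized_ren_binder P a s M :
  (forall s' M', authorized M' P -> authorized (map s' M') (ren s' P)) ->
  let z := fresh (map s (remove Nat.eq_dec a (fn P))) in
  authorized (remove Nat.eq_dec a M) P ->
  authorized (remove Nat.eq_dec z (map s M)) (ren (upd s a z) P).
Proof.
  intros IH z H.
  (* [z] is fresh only for the images of the free names, so [M] is first cut down to them. *)
  set (L := remove Nat.eq_dec a (fn P)). set (M1 := restrict L M).
  assert (H1 : authorized M1 P).
  { revert H. apply authorized_weaken. intros n Hn. rewrite mult_remove.
    destruct (Nat.eqb_spec n a) as [->|Hna]; [lia|].
    unfold M1. rewrite mult_restrict by (apply in_in_remove; assumption). reflexivity. }
  apply (IH (upd s a z)) in H1.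
  assert (E : map (upd s a z) M1 = map s M1).
  { apply map_ext_in. intros m Hm. apply In_restrict, in_remove in Hm. unfold upd.
    destruct (Nat.eqb_spec m a); [tauto|reflexivity]. }
  rewrite E in H1. revert H1. apply authorized_weaken. intros n _. rewrite mult_remove.
  destruct (Nat.eqb_spec n z) as [->|Hnz]; [|apply mult_map_restrict_le].
  enough (mult (map s M1) z = 0) by lia.
  apply count_occ_not_In. intros Hz. apply in_map_iff in Hz. destruct Hz as [m [Em Hm]].
  apply (fresh_notin (map s L)). change (In z (map s L)).
  rewrite <- Em. apply in_map, (In_restrict _ M), Hm.
Qed.

Lemma authorized_ren P s M : authorized M P -> authorized (map s M) (ren s P).
Proof.
  revert s M.
  induction P as [|P1 IH1 P2 IH2|c P IH|c P IH|[c d|c x|c d|c d] P IH]; intros s M; simpl.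
  - trivial.
  - intros [H1 H2]. auto.
  - apply authorized_ren_binder, IH.
  - apply (IH s (c :: M)).
  - intros [Hc H]. auto using in_map.
  - intros [Hc H]. split; [apply in_map, Hc|]. apply authorized_ren_binder; assumption.
  - intros [Hc [Hd H]]. split; [|split]; [apply in_map; assumption ..|].
    apply (IH s) in H. revert H. apply authorized_weaken. intros n _.
    rewrite mult_remove_one, (mult_map_remove_one s M d n Hd). case_eqb; lia.
  - intros [Hc H]. split; [apply in_map, Hc|]. apply (IH s (d :: M)), H.
Qed.

Lemma authorized_subst Q c x M :
  authorized (remove Nat.eq_dec x M) Q -> authorized M (subst Q c x).
Proof.
  intros H. apply (authorized_ren _ (upd (fun n => n) x c)) in H.
  replace (map _ _) with (remove Nat.eq_dec x M) in H.
  - revert H. apply authorized_weaken. intros n _. rewrite mult_remove. case_eqb; lia.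
  - rewrite <- map_id at 1. apply map_ext_in. intros m Hm. apply in_remove in Hm. unfold upd.
    destruct (Nat.eqb_spec m x); [tauto|reflexivity].
Qed.

Lemma cong_authorized P Q : cong P Q -> forall M, authorized M P <-> authorized M Q.
Proof.
  induction 1; intros M; simpl.
  - reflexivity.
  - symmetry; apply IHcong.
  - rewrite IHcong1; apply IHcong2.
  - rewrite IHcong1, IHcong2; reflexivity.
  - apply IHcong.
  - apply IHcong.
  - destruct al; simpl; rewrite IHcong; reflexivity.
  - tauto.
  - tauto.
  - tauto.
  - tauto.
  - apply authorized_ext. intros n _. rewrite !mult_remove. case_eqb; reflexivity.
  - rewrite (authorized_ext P M (remove Nat.eq_dec a M)); [reflexivity|].
    intros n Hn. rewrite mult_remove. case_eqb; [contradiction|reflexivity].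
  - apply authorized_alpha. assumption.
  - rewrite authorized_alpha by eassumption. reflexivity.
  - apply authorized_ext. intros n _. rewrite !mult_cons. lia.
  - tauto.
  - tauto.
  - destruct (Nat.eq_dec b a); [congruence|reflexivity].
Qed.

Lemma authorized_auths l X Y :
  (forall M, authorized M X -> authorized M Y) ->
  forall M, authorized M (auths l X) -> authorized M (auths l Y).
Proof. induction l as [|a l IH]; simpl; auto. Qed.

Lemma red_authorized P Q : red P Q -> forall M, authorized M P -> authorized M Q.
Proof.
  induction 1; intros M; simpl.
  - intros [H1 H2]. split; [revert H1 | revert H2]; apply authorized_auths; simpl.
    + tauto.
    + intros N [_ H]. apply authorized_subst, H.
  - intros [H1 H2]. split; [revert H1 | revert H2]; apply authorized_auths; simpl.
    + rewrite Nat.eqb_refl. tauto.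
    + tauto.
  - intuition.
  - apply IHred.
  - apply IHred.
  - rewrite (cong_authorized _ _ H), <- (cong_authorized _ _ H1). apply IHred.
Qed.

Lemma red_star_authorized P Q M : red_star P Q -> authorized M P -> authorized M Q.
Proof. induction 1; eauto using red_authorized. Qed.

Lemma typed_authorized rho P M :
  typed rho P -> (forall n, rho n -> In n M) -> authorized M P.
Proof.
  intros Ht. revert M. induction Ht; intros M HM; simpl.
  - trivial.
  - split; [apply IHHt1 | apply IHHt2]; intros n Hn; apply HM, H; auto.
  - apply IHHt. intros n Hn. apply in_in_remove; [congruence | auto].
  - apply IHHt. intros n Hn. destruct (Nat.eq_dec n a); [left | right; apply HM, H]; auto.
  - split; [apply HM, H; auto|]. apply IHHt. intros n Hn. apply HM, H; auto.
  - split; [apply HM, H0; auto|]. apply IHHt. intros n Hn.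
    apply in_in_remove; [congruence | apply HM, H0; auto].
  - split; [|split]; [apply HM, H0; auto ..|]. apply IHHt. intros n Hn.
    apply In_mult. rewrite mult_remove_one. destruct (Nat.eqb_spec n b); [congruence|].
    apply In_mult, HM, H0. auto.
  - split; [apply HM, H; auto|]. apply IHHt. intros n Hn.
    destruct (Nat.eq_dec b n); [left | right; apply HM, H]; auto.
Qed.

Lemma authorized_plug C X M : authorized M (plug C X) ->
  exists N, authorized N X /\ forall n, In n N -> In n M \/ cauth C n = true.
Proof.
  revert M. induction C as [|R C IH|a C IH|a C IH]; intros M; simpl.
  - eauto.
  - intros [_ H]. apply IH, H.
  - intros H. apply IH in H as [N [HN HI]]. exists N. split; [exact HN|].
    intros n Hn. destruct (HI n Hn) as [H|H]; auto. left. apply in_remove in H. tauto.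
  - intros H. apply IH in H as [N [HN HI]]. exists N. split; [exact HN|].
    intros n Hn. destruct (Nat.eqb_spec n a); [right; reflexivity|].
    destruct (HI n Hn) as [[E|H]|H]; [congruence | auto | auto].
Qed.

Lemma authorized_not_error Q : authorized [] Q -> ~ error Q.
Proof.
  intros HQ [C [al [X [HC Herr]]]].
  apply (cong_authorized _ _ HC) in HQ.
  destruct (authorized_plug _ _ _ HQ) as [N [HN HI]].
  assert (HNC : forall n, In n N -> cauth C n = true)
    by (intros n Hn; destruct (HI n Hn) as [[]|H]; exact H).
  destruct Herr as [Hs | [b [Eal Hb]]].
  - assert (In (subj al) N) by (destruct al; simpl in *; tauto).
    rewrite HNC in Hs by assumption. discriminate.
  - rewrite Eal in HN. simpl in HN. rewrite HNC in Hb by tauto. discriminate.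
Qed.

Theorem mainTheorem8 : forall P Q : proc,
  typed (fun _ => False) P -> red_star P Q -> ~ error Q.
Proof.
  intros P Q Ht Hs. apply authorized_not_error.
  apply (red_star_authorized P); [assumption|].
  apply (typed_authorized _ _ _ Ht). contradiction.
Qed.
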